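(* Let $(F,<_F)$ and $(G,<_G)$ be ordered groups and let $\prec$ be the ordering of $F*G$ described in the context. Then the kernel of the canonical homomorphism $\alpha\colon F*G\to F\times G$, $\alpha(f_1g_1\cdots f_kg_k)=(f_1\cdots f_k,g_1\cdots g_k)$, is a convex subset of $(F*G,\prec)$.
   Context: A subset $C$ of an ordered group $(H,<)$ is convex if $c<h<c'$ with $c,c'\in C$ implies $h\in C$. Construction of $\prec$: order $F\times G$ lexicographically ($(f,g)<(f',g')$ iff $f<_Ff'$, or $f=f'$ and $g<_Gg'$); in $R=\mathbb{Z}(F\times G)$ call a nonzero element positive if the coefficient of its largest group element is a positive integer. Let $\rho\colon F*G\to M_2(R[t])$ be the homomorphism with $\rho(f)=\begin{pmatrix} f&(f-1)t\\0&1\end{pmatrix}$, $\rho(g)=\begin{pmatrix}1&0\\(g-1)t&g\end{pmatrix}$; it is injective. Order matrix positions $(1,1)$, $(2,2)$, then the off-diagonal ones in a fixed order. A nonzero $M=\sum_iM_it^i$ is positive if for the least $n$ with $M_n\ne0$ the first nonzero entry of $M_n$ is positive in $R$. Set $x\prec y$ iff $\rho(y)-\rho(x)$ is positive. *)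

From mathcomp Require Import all_boot all_order all_algebra.
Set Implicit Arguments. Unset Strict Implicit. Unset Printing Implicit Defensive.
Import Order.TTheory GRing.Theory Num.Theory.
Local Open Scope ring_scope.

Record ogroup := OGroup {
  og_car :> eqType;
  og_mul : og_car -> og_car -> og_car;
  og_one : og_car;
  og_inv : og_car -> og_car;
  og_lt  : rel og_car;
  og_mulA : forall x y z, og_mul x (og_mul y z) = og_mul (og_mul x y) z;
  og_mul1 : forall x, og_mul og_one x = x;
  og_mulV : forall x, og_mul (og_inv x) x = og_one;
  og_ltirr : forall x, ~~ og_lt x x;
  og_lttr : forall x y z, og_lt x y -> og_lt y z -> og_lt x z;
  og_lttot : forall x y, x != y -> og_lt x y || og_lt y x;
  og_ltmull : forall x y z, og_lt x y -> og_lt (og_mul z x) (og_mul z y);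
  og_ltmulr : forall x y z, og_lt x y -> og_lt (og_mul x z) (og_mul y z)
}.

Section FreeProduct.
Variables F G : ogroup.

(* Elements of F*G: reduced words over the alphabet F + G. *)
Definition letter_ok (l : F + G) : bool :=
  match l with inl f => f != (@og_one F) | inr g => g != (@og_one G) end.
Definition same_side (a b : F + G) : bool :=
  match a, b with inl _, inl _ => true | inr _, inr _ => true | _, _ => false end.
Definition reduced (w : seq (F + G)) : bool :=
  all letter_ok w && sorted (fun a b => ~~ same_side a b) w.

Definition alphaF (w : seq (F + G)) : F :=
  foldr ((@og_mul F)) ((@og_one F)) (pmap (fun l => if l is inl f then Some f else None) w).
Definition alphaG (w : seq (F + G)) : G :=
  foldr ((@og_mul G)) ((@og_one G)) (pmap (fun l => if l is inr g then Some g else None) w).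
Definition in_ker_alpha (w : seq (F + G)) : Prop :=
  alphaF w = (@og_one F) /\ alphaG w = (@og_one G).

(* Elements of R[t], R = Z(F x G): finite formal sums  sum c * t^i * (f,g). *)
Definition FG := (F * G)%type.
Definition poly := seq (int * (nat * FG)).
Definition pmul (p q : poly) : poly :=
  [seq (a.1 * b.1, ((a.2.1 + b.2.1)%N,
        ((@og_mul F) a.2.2.1 b.2.2.1, (@og_mul G) a.2.2.2 b.2.2.2))) | a <- p, b <- q].
Definition padd (p q : poly) : poly := p ++ q.
Definition popp (p : poly) : poly := [seq (- a.1, a.2) | a <- p].
Definition pcoef (p : poly) (n : nat) (x : FG) : int :=
  \sum_(a <- p | a.2 == (n, x)) a.1.

Definition pconst (c : int) (x : FG) : poly := [:: (c, (0%N, x))].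
Definition ptx (c : int) (x : FG) : poly := [:: (c, (1%N, x))].
Definition one_FG : FG := ((@og_one F), (@og_one G)).

Record mat := Mat { m11 : poly; m12 : poly; m21 : poly; m22 : poly }.
Definition matmul (A B : mat) : mat :=
  Mat (padd (pmul (m11 A) (m11 B)) (pmul (m12 A) (m21 B)))
      (padd (pmul (m11 A) (m12 B)) (pmul (m12 A) (m22 B)))
      (padd (pmul (m21 A) (m11 B)) (pmul (m22 A) (m21 B)))
      (padd (pmul (m21 A) (m12 B)) (pmul (m22 A) (m22 B))).
Definition matsub (A B : mat) : mat :=
  Mat (padd (m11 A) (popp (m11 B))) (padd (m12 A) (popp (m12 B)))
      (padd (m21 A) (popp (m21 B))) (padd (m22 A) (popp (m22 B))).
Definition matone : mat := Mat (pconst 1 one_FG) [::] [::] (pconst 1 one_FG).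

(* rho(f) = [[f, (f-1)t],[0,1]],  rho(g) = [[1,0],[(g-1)t, g]] *)
Definition rho_letter (l : F + G) : mat :=
  match l with
  | inl f => Mat (pconst 1 (f, (@og_one G)))
                 (ptx 1 (f, (@og_one G)) ++ ptx (-1) one_FG)
                 [::] (pconst 1 one_FG)
  | inr g => Mat (pconst 1 one_FG) [::]
                 (ptx 1 ((@og_one F), g) ++ ptx (-1) one_FG)
                 (pconst 1 ((@og_one F), g))
  end.
Definition rho (w : seq (F + G)) : mat := foldr matmul matone (map rho_letter w).

Definition lexlt (x y : FG) : bool :=
  og_lt x.1 y.1 || ((x.1 == y.1) && og_lt x.2 y.2).

(* positivity in R = Z(F x G), for an element given by its coefficient function:
   nonzero and the coefficient of its largest group element is positive *)
Definition R_zero (r : FG -> int) : Prop := forall x, r x = 0.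
Definition R_pos (r : FG -> int) : Prop :=
  exists x, 0 < r x /\ forall y, lexlt x y -> r y = 0.

Fixpoint first_nonzero_pos (l : seq (FG -> int)) : Prop :=
  match l with
  | [::] => False
  | r :: l' => R_pos r \/ (R_zero r /\ first_nonzero_pos l')
  end.

Definition entries (off : bool) (M : mat) (n : nat) : seq (FG -> int) :=
  [:: pcoef (m11 M) n; pcoef (m22 M) n] ++
  (if off then [:: pcoef (m12 M) n; pcoef (m21 M) n]
          else [:: pcoef (m21 M) n; pcoef (m12 M) n]).

Definition mat_zero_at (M : mat) (n : nat) : Prop :=
  forall x, pcoef (m11 M) n x = 0 /\ pcoef (m12 M) n x = 0 /\
            pcoef (m21 M) n x = 0 /\ pcoef (m22 M) n x = 0.

Definition mat_pos (off : bool) (M : mat) : Prop :=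
  exists n, (forall m, (m < n)%N -> mat_zero_at M m) /\
            first_nonzero_pos (entries off M n).

Definition prec (off : bool) (x y : seq (F + G)) : Prop :=
  mat_pos off (matsub (rho y) (rho x)).

Definition convex_in_FP (off : bool) (C : seq (F + G) -> Prop) : Prop :=
  forall c h c', reduced c -> reduced h -> reduced c' -> C c -> C c' ->
    prec off c h -> prec off h c' -> C h.

End FreeProduct.

From Pilot Require Import Defs.
From mathcomp Require Import all_boot all_order all_algebra.
Set Implicit Arguments. Unset Strict Implicit. Unset Printing Implicit Defensive.
Import Order.TTheory GRing.Theory Num.Theory.
Local Open Scope ring_scope.

(* The constant term of [rho w] is the diagonal matrix with entries
   [(alphaF w, 1)] and [(1, alphaG w)], since every generator matrix is
   diagonal modulo [t].  Comparing [rho y - rho x] at the least degree where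
   it is nonzero therefore shows that [alpha] is order preserving from
   [(F*G, prec)] to [F x G] ordered lexicographically, and the kernel of
   [alpha], the preimage of a point, is convex. *)

Lemma og_lt_asym (H : ogroup) (x y : H) : og_lt x y -> og_lt y x -> False.
Proof. by move=> xy /(og_lttr xy); rewrite (negbTE (og_ltirr x)). Qed.

Section AlphaMonotone.
Variables F G : ogroup.

Local Notation word := (seq (F + G)).
Local Notation FG := (Defs.FG F G).
Local Notation Rpoly := (Defs.poly F G).

Definition alpha (w : word) : FG := (alphaF w, alphaG w).

Definition lexle (u v : FG) : bool := (u == v) || lexlt u v.

Lemma lexlt_total (u v : FG) : u != v -> lexlt u v || lexlt v u.
Proof.
case: u v => [u1 u2] [v1 v2]; rewrite /lexlt /=.
case: (eqVneq u1 v1) => [-> uv | /og_lttot/orP[]->]; rewrite ?orbT //.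
rewrite (negbTE (og_ltirr v1)) /=; apply: og_lttot.
by apply: contra uv => /eqP ->.
Qed.

Lemma lexlt_asym (u v : FG) : lexlt u v -> lexlt v u -> False.
Proof.
case: u v => [u1 u2] [v1 v2]; rewrite /lexlt /=.
case: (eqVneq u1 v1) => [->|_] /=; rewrite ?(negbTE (og_ltirr v1)) /=.
  exact: og_lt_asym.
by rewrite !orbF; exact: og_lt_asym.
Qed.

Lemma lexle_anti (u v : FG) : lexle u v -> lexle v u -> u = v.
Proof.
rewrite /lexle; case: (eqVneq u v) => //= _ uv.
by move=> /(lexlt_asym uv).
Qed.

Lemma lexlt_fst (a b : F) (g : G) : lexlt (a, g) (b, g) = og_lt a b.
Proof. by rewrite /lexlt /= (negbTE (og_ltirr g)) andbF orbF. Qed.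

Lemma lexlt_snd (f : F) (a b : G) : lexlt (f, a) (f, b) = og_lt a b.
Proof. by rewrite /lexlt /= (negbTE (og_ltirr f)) eqxx. Qed.

Definition const_part (p : Rpoly) : Rpoly := [seq a <- p | a.2.1 == 0%N].

Lemma pmul_nil (p : Rpoly) : pmul p [::] = [::].
Proof. by elim: p. Qed.

Lemma const_part_pmul (p q : Rpoly) :
  const_part (pmul p q) = pmul (const_part p) (const_part q).
Proof.
elim: p => [|a p IH] //; rewrite /const_part /pmul /= filter_cat filter_map.
rewrite /const_part /pmul in IH; rewrite IH; case: ifP => a0 /=.
  by congr (_ ++ _); congr map; apply: eq_filter => b /=; rewrite (eqP a0).
by rewrite (@eq_filter _ _ pred0) ?filter_pred0 // => b /=; rewrite addn_eq0 a0.
Qed.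

Lemma pcoef0_const_part (p : Rpoly) z : pcoef (const_part p) 0 z = pcoef p 0 z.
Proof.
rewrite /pcoef /const_part big_filter_cond; apply: eq_bigl => -[c [n y]] /=.
by case: n => //=; rewrite andbb.
Qed.

Lemma pcoef_sub (p q : Rpoly) n z :
  pcoef (padd p (popp q)) n z = pcoef p n z - pcoef q n z.
Proof. by rewrite /pcoef big_cat big_map sumrN. Qed.

Definition delta_diff (u v : FG) (z : FG) : int := (u == z)%:R - (v == z)%:R.

Lemma pcoef_pconst1 (u z : FG) : pcoef (pconst 1 u) 0 z = (u == z)%:R.
Proof.
rewrite /pcoef big_cons big_nil /= xpair_eqE eqxx /=.
by case: (u == z); rewrite ?addr0.
Qed.

Lemma rho_const_part (w : word) :
  [/\ const_part (m11 (rho w)) = pconst 1 (alphaF w, og_one G),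
      const_part (m12 (rho w)) = [::], const_part (m21 (rho w)) = [::] &
      const_part (m22 (rho w)) = pconst 1 (og_one F, alphaG w)].
Proof.
elim: w => [|l w [E11 E12 E21 E22]] //.
rewrite /rho /= -/(rho w) /const_part /= !filter_cat -!/(const_part _).
rewrite !const_part_pmul E11 E12 E21 E22.
by case: l => [f|g] /=; rewrite ?pmul_nil /pmul /one_FG /= !og_mul1.
Qed.

Lemma pcoef0_rho_sub (x y : word) z :
  pcoef (m11 (matsub (rho y) (rho x))) 0 z =
    delta_diff (alphaF y, og_one G) (alphaF x, og_one G) z /\
  pcoef (m22 (matsub (rho y) (rho x))) 0 z =
    delta_diff (og_one F, alphaG y) (og_one F, alphaG x) z.
Proof.
rewrite !pcoef_sub -!(pcoef0_const_part (m11 _)) -!(pcoef0_const_part (m22 _)).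
have [-> _ _ ->] := rho_const_part y; have [-> _ _ ->] := rho_const_part x.
by rewrite !pcoef_pconst1.
Qed.

Lemma R_pos_delta_diff (r : FG -> int) u v :
  (forall z, r z = delta_diff u v z) -> R_pos r -> lexlt v u.
Proof.
move=> Er [x [rx_gt0 r_above]]; move: rx_gt0; rewrite Er /delta_diff.
case: (eqVneq u x) => [ux|_]; last first.
  by case: (v == x); rewrite ?oppr_gt0 ?ltr01 ?ltxx.
subst x; case: (eqVneq v u) => [->|vu _]; first by rewrite subrr ltxx.
have /orP[] := lexlt_total vu => // /(r_above v).
by rewrite Er /delta_diff eqxx eq_sym (negbTE vu) sub0r => /eqP; rewrite oppr_eq0.
Qed.

Lemma R_zero_delta_diff (r : FG -> int) u v :
  (forall z, r z = delta_diff u v z) -> R_zero r -> u = v.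
Proof.
move=> Er /(_ u); rewrite Er /delta_diff eqxx.
by case: (eqVneq v u).
Qed.

Lemma alpha_monotone off (x y : word) : prec off x y -> lexle (alpha x) (alpha y).
Proof.
have c11 z := (pcoef0_rho_sub x y z).1; have c22 z := (pcoef0_rho_sub x y z).2.
have zero11 := R_zero_delta_diff c11; have zero22 := R_zero_delta_diff c22.
rewrite /lexle /alpha /lexlt /=.
case=> -[|?] [zero_below first_pos]; last first.
  have zero0 := zero_below 0%N isT.
  have [->] : (alphaF y, og_one G) = (alphaF x, og_one G).
    by apply: zero11 => z; case: (zero0 z).
  have [->] : (og_one F, alphaG y) = (og_one F, alphaG x).
    by apply: zero22 => z; case: (zero0 z) => _ [_ []].
  by rewrite eqxx.
case: first_pos => [/(R_pos_delta_diff c11)|[/zero11[eF] []]].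
- by rewrite lexlt_fst => ->; rewrite orbT.
- by move/(R_pos_delta_diff c22); rewrite lexlt_snd eF eqxx => ->; rewrite !orbT.
- by move=> [/zero22[->]]; rewrite eF eqxx.
Qed.

End AlphaMonotone.

Theorem corollary4p3 (F G : ogroup) (off : bool) :
  convex_in_FP off (@in_ker_alpha F G).
Proof.
move=> c h c' _ _ _ [Fc Gc] [Fc' Gc'] /alpha_monotone ch /alpha_monotone hc'.
rewrite /alpha Fc Gc in ch; rewrite /alpha Fc' Gc' in hc'.
by have [] := lexle_anti hc' ch.
Qed.
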